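(* Let $N\ge1$ and let $\mathcal{A}=\prod_{n=1}^N\mathcal{A}_n$ be a finite set of reservation vectors. Let $C(a,b)=C_R(a)+C_V(a,b)+C_T(a,b)$ be the total cost of reservation $a\in\mathcal{A}$ under job request vector $b$, and assume there is $\Theta>0$ such that $|C_R(a)|\le\Theta$, $|C_T(a,b)|\le\Theta$ and $|C_V(a,b)|\le\Theta$ for all reservations $a\in\mathcal{A}$ and all job request vectors $b$. Fix a horizon $T>0$, take $\eta=\sqrt{\log|\mathcal{A}|/T}$, and let $b^1,\dots,b^T$ be any sequence of job request vectors. Run the exponentially weighted strategy: at each $t=1,\dots,T$ the reservation $A^t$ is drawn at random (independently given the past draws) from the distribution $P^t$ on $\mathcal{A}$ given by $$w^t(a)=\exp\Big\{-\eta\sum_{s=1}^{t-1}C(a,b^s)\Big\},\qquad P^t_a=\frac{w^t(a)}{\sum_{a'\in\mathcal{A}}w^t(a')}.$$ Define the regret $R_T=\sum_{t=1}^TC(A^t,b^t)-\min_{a\in\mathcal{A}}\sum_{t=1}^TC(a,b^t)$. Then for any $0<\delta<1$, with probability at least $1-\delta$, $$R_T\le\Big(\frac{9\Theta^2}{8}+1\Big)\sqrt{T\log|\mathcal{A}|}+3\Theta\sqrt{\tfrac12\log(\delta^{-1})\,T}.$$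
   Context: Setting: a network of $N$ servers; at each time slot $t$ an administrator chooses a reservation vector $a=(a_1,\dots,a_N)\in\mathcal{A}$ (with $\mathcal{A}_n$ the finite set of possible reservation levels at server $n$) before observing the job requests $b=(b_1,\dots,b_N)$; jobs may then be transferred between servers. With positive functions $f^R_n,f^V_n,f^T_{n,m}$, the costs are $C_R(a)=\sum_{n}f^R_n(a_n)$, $C_V(a,b)=\sum_n f^V_n\big(b_n-a_n-\sum_{m}\delta_{n,m}\big)$, $C_T(a,b)=\sum_n\sum_{m\ne n}f^T_{n,m}(\delta_{n,m})$, where the transfer amounts $\delta_{n,m}=\delta_{n,m}(a,b)$ are an optimal solution of $\min\sum_n\big(\sum_{m\ne n}f^T_{n,m}(\delta_{n,m})+f^V_n(b_n-a_n-\sum_{m\ne n}\delta_{n,m})\big)$ subject to $\delta_{n,m}\le\min\{(b_n-a_n)^+,(a_m-b_m)^+\}$ for all $n\ne m$. The probability is over the random draws $A^1,\dots,A^T$. *)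

From HB Require Import structures.
From mathcomp Require Import all_boot all_order all_algebra.
From mathcomp Require Import finmap.
From mathcomp Require Import reals sequences exp.
Set Implicit Arguments. Unset Strict Implicit. Unset Printing Implicit Defensive.
Import Order.TTheory GRing.Theory Num.Theory.
Local Open Scope ring_scope.
Local Open Scope fset_scope.

Section Network.
Variables (R : realType) (N : nat).

Variable Alev : 'I_N -> {fset R}.

Definition Act : finType := {dffun forall n : 'I_N, Alev n}.

Definition aval (a : Act) : 'I_N -> R := fun n => fsval (a n).

Variables (fR fV : 'I_N -> R -> R) (fT : 'I_N -> 'I_N -> R -> R).

Definition feasible (a b : 'I_N -> R) (d : 'I_N -> 'I_N -> R) : Prop :=
  forall n m : 'I_N, n != m ->
    d n m <= Num.min (Num.max (b n - a n) 0) (Num.max (a m - b m) 0).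

Definition transfer_obj (a b : 'I_N -> R) (d : 'I_N -> 'I_N -> R) : R :=
  \sum_(n < N) (\sum_(m < N | m != n) fT n m (d n m)
                + fV n (b n - a n - \sum_(m < N | m != n) d n m)).

Definition optimal_transfer (a b : 'I_N -> R) (d : 'I_N -> 'I_N -> R) : Prop :=
  feasible a b d /\ forall d', feasible a b d' -> transfer_obj a b d <= transfer_obj a b d'.

(* a selection delta(a,b) of optimal transfers *)
Variable delta : ('I_N -> R) -> ('I_N -> R) -> 'I_N -> 'I_N -> R.

Definition CR (a : Act) : R := \sum_(n < N) fR n (aval a n).
Definition CV (a : Act) (b : 'I_N -> R) : R :=
  \sum_(n < N) fV n (b n - aval a n - \sum_(m < N | m != n) delta (aval a) b n m).
Definition CT (a : Act) (b : 'I_N -> R) : R :=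
  \sum_(n < N) \sum_(m < N | m != n) fT n m (delta (aval a) b n m).
Definition Cost (a : Act) (b : 'I_N -> R) : R := CR a + CV a b + CT a b.

Definition finmin (T : finType) (F : T -> R) : R :=
  if [pick a : T] is Some a0 then \big[Num.min/F a0]_(a : T) F a else 0.

Variables (T : nat) (bs : 'I_T -> ('I_N -> R)) (eta : R).
(* time t : 'I_T stands for round t+1 *)

Definition weight (t : 'I_T) (a : Act) : R :=
  expR (- eta * \sum_(s < T | (s < t)%N) Cost a (bs s)).

Definition Pdist (t : 'I_T) (a : Act) : R := weight t a / \sum_(a' : Act) weight t a'.

Definition regret (x : {ffun 'I_T -> Act}) : R :=
  \sum_(t < T) Cost (x t) (bs t) - finmin (fun a : Act => \sum_(t < T) Cost a (bs t)).

(* joint law of the draws: A^t drawn from P^t independently given the past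
   (P^t depends only on the fixed sequence b, so the law is a product) *)
Definition Prob (E : pred {ffun 'I_T -> Act}) : R :=
  \sum_(x : {ffun 'I_T -> Act} | E x) \prod_(t < T) Pdist t (x t).

End Network.

From mathcomp Require Import all_boot all_order all_algebra.
From mathcomp Require Import finmap.
From mathcomp Require Import reals sequences exp.
From mathcomp Require Import boolp functions interval_inference normedtype.
From mathcomp Require Import derive realfun convex.
From mathcomp Require Import ring lra.
Import Order.TTheory GRing.Theory Num.Theory.
Import numFieldNormedType.Exports.
Local Open Scope ring_scope.

(* All costs lie in [0, M] with M = 3 Theta.  Write p_t for the expected cost of the
   round-t distribution and W_t = sum_a exp(-eta L_t(a)) for the potential.  Hoeffding's
   lemma gives W_{t+1} <= W_t exp(-eta p_t + eta^2 M^2 / 8); telescoping and comparing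
   W_T with the weight of any single action a yields
   sum_t p_t - L_T(a) <= ln|A| / eta + T eta M^2 / 8 = (M^2/8 + 1) sqrt(T ln|A|).
   The weights do not depend on the draws, so the draws are independent and the
   realised cost minus sum_t p_t is a sum of independent centred variables with range M;
   a Chernoff bound with Hoeffding's lemma makes it exceed M sqrt(T ln(1/delta) / 2)
   with probability at most delta. *)

Lemma is_derive_ndecr (R : realType) (f f' : R -> R) (a b : R) :
  (forall x, is_derive x (1 : R) f (f' x)) -> (forall x, a < x < b -> 0 <= f' x) ->
  a <= b -> f a <= f b.
Proof.
move=> df f'_ge0 ab; apply: (@ger0_derive1_ndecr R f a b) => //.
- by move=> x; rewrite in_itv /= derive1E; have [_ ->] := df x; exact: f'_ge0.
- by apply: derivable_within_continuous => x _; case: (df x).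
Qed.

Lemma is_derive_nincr (R : realType) (f f' : R -> R) (a b : R) :
  (forall x, is_derive x (1 : R) f (f' x)) -> (forall x, a < x < b -> f' x <= 0) ->
  a <= b -> f b <= f a.
Proof.
move=> df f'_le0 ab; rewrite -lerN2.
apply: (@is_derive_ndecr R (- f) (- f')) => // x /f'_le0.
by rewrite oppr_ge0.
Qed.

Section HoeffdingBernoulli.
Variables (R : realType) (q : R).
Hypotheses (q_ge0 : 0 <= q) (q_le1 : q <= 1).

Local Definition mgf (h : R) : R := 1 - q + q * expR h.

Let mgf_gt0 h : 0 < mgf h.
Proof.
have := expR_gt0 h; rewrite /mgf => eh.
have [e1|e1] := lerP 1 (expR h).
  have : 0 <= q * (expR h - 1) by rewrite mulr_ge0 // subr_ge0.
  lra.
have : 0 <= (1 - q) * (1 - expR h) by rewrite mulr_ge0 // subr_ge0 // ltW.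
lra.
Qed.

Local Definition tilt (h : R) : R := q * expR h / mgf h.

Local Definition gap' (h : R) : R := q + h / 4 - tilt h.
Local Definition gap (h : R) : R := q * h + h ^+ 2 / 8 - ln (mgf h).

Let is_derive_mgf x : is_derive x (1 : R) mgf (q * expR x).
Proof.
have := is_deriveD (is_derive_cst (1 - q) x 1) (is_deriveZ q (is_derive_expR x)).
rewrite add0r; congr is_derive; exact/funext.
Qed.

Let mgf_neq0 h : mgf h != 0. Proof. exact/lt0r_neq0/mgf_gt0. Qed.

Let is_derive_tilt x : is_derive x (1 : R) tilt (tilt x * (1 - tilt x)).
Proof.
have := is_deriveM (is_deriveZ q (is_derive_expR x)) (is_deriveV (mgf_neq0 x) (is_derive_mgf x)).
congr is_derive.
by rewrite /tilt /= -![_ *: _]/(_ * _); field.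
Qed.

Let is_derive_gap' x : is_derive x (1 : R) gap' ((2^-1 - tilt x) ^+ 2).
Proof.
have := is_deriveB (is_deriveD (is_derive_cst q x 1) (is_deriveZ (4^-1) (is_derive_id x 1)))
  (is_derive_tilt x).
congr is_derive.
  by apply/funext => h; rewrite /gap' [h / 4]mulrC.
by rewrite /= -[_%:A]/(_ * 1); field.
Qed.

Let is_derive_gap x : is_derive x (1 : R) gap (gap' x).
Proof.
have := is_deriveB (is_deriveD (is_deriveZ q (is_derive_id x 1))
    (is_deriveZ (8^-1) (is_deriveX 2 (is_derive_id x 1))))
  (is_derive1_comp (is_derive1_ln (mgf_gt0 x)) (is_derive_mgf x)).
congr is_derive.
  by apply/funext => h; rewrite /gap [h ^+ 2 / 8]mulrC.
by rewrite /gap' /tilt /= -![_%:A]/(_ * 1) -[_ *: _]/(_ * _); field.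
Qed.

(* [gap] has derivative [gap'], which is nondecreasing since its derivative is a
   square, and vanishes at 0; hence [gap] is minimal, and zero, at 0. *)
Lemma hoeffding_bernoulli h : 1 - q + q * expR h <= expR (q * h + h ^+ 2 / 8).
Proof.
have gap'_ndecr a b : a <= b -> gap' a <= gap' b.
  by apply: is_derive_ndecr is_derive_gap' _ => x _; exact: sqr_ge0.
have gap'0 : gap' 0 = 0 by rewrite /gap' /tilt /mgf expR0 mulr1 subrK divr1 mul0r addr0 subrr.
have gap0 : gap 0 = 0 by rewrite /gap /mgf expR0 mulr1 subrK ln1 mulr0 expr0n /= mul0r !addr0 subr0.
have : gap 0 <= gap h.
  have [h_ge0|h_lt0] := lerP 0 h.
    apply: is_derive_ndecr is_derive_gap _ h_ge0 => x /andP[x_gt0 _].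
    by rewrite -gap'0 gap'_ndecr // ltW.
  apply: is_derive_nincr is_derive_gap _ (ltW h_lt0) => x /andP[_ x_lt0].
  by rewrite -gap'0 gap'_ndecr // ltW.
rewrite gap0 subr_ge0 -ler_expR lnK //; exact: mgf_gt0.
Qed.

End HoeffdingBernoulli.

Lemma expR_le_chord (R : realType) (s h : R) : 0 <= s <= 1 ->
  expR (s * h) <= 1 - s + s * expR h.
Proof.
case/andP=> s_ge0 s_le1.
have := @convex_expR R (Itv01 s_ge0 s_le1) h 0.
by rewrite !convRE /= expR0 mulr0 mulr1 addr0 /unstable.onem addrC.
Qed.

Lemma hoeffding_lemma (R : realType) (I : finType) (P X : I -> R) (M lam : R) :
  0 < M -> (forall i, 0 <= P i) -> \sum_i P i = 1 -> (forall i, 0 <= X i <= M) ->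
  \sum_i P i * expR (lam * (X i - \sum_j P j * X j)) <= expR (lam ^+ 2 * M ^+ 2 / 8).
Proof.
move=> M_gt0 P_ge0 P_sum1 X_range.
(* By convexity, the mgf of X is at most that of the variable with the same mean on {0, M}. *)
set m := \sum_j P j * X j.
have m_ge0 : 0 <= m.
  by apply: sumr_ge0 => i _; apply: mulr_ge0 => //; case/andP: (X_range i).
have m_leM : m <= M.
  rewrite -[leRHS]mul1r -P_sum1 mulr_suml; apply: ler_sum => i _.
  by apply: ler_wpM2l => //; case/andP: (X_range i).
have chord i : expR (lam * X i) <= 1 - X i / M + X i / M * expR (lam * M).
  have -> : lam * X i = X i / M * (lam * M) by field; exact: lt0r_neq0.
  apply: expR_le_chord; case/andP: (X_range i) => Xi_ge0 Xi_leM.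
  by rewrite divr_ge0 ?(ltW M_gt0) //= ler_pdivrMr // mul1r.
have mean_chord : \sum_i P i * (1 - X i / M + X i / M * expR (lam * M))
    = 1 - m / M + m / M * expR (lam * M).
  transitivity (\sum_i (P i + P i * X i * ((expR (lam * M) - 1) / M))).
    by apply: eq_bigr => i _; field; exact: lt0r_neq0.
  by rewrite big_split /= P_sum1 -mulr_suml -/m; field; exact: lt0r_neq0.
have mM_ge0 : 0 <= m / M by rewrite divr_ge0 // ltW.
have mM_le1 : m / M <= 1 by rewrite ler_pdivrMr // mul1r.
apply: le_trans (_ : expR (- (lam * m)) * (1 - m / M + m / M * expR (lam * M)) <= _).
  rewrite -mean_chord mulr_sumr; apply: ler_sum => i _.
  rewrite mulrBr expRD [expR (lam * X i) * _]mulrC mulrCA.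
  by rewrite ler_wpM2l ?expR_ge0 // ler_wpM2l.
have := @hoeffding_bernoulli R (m / M) mM_ge0 mM_le1 (lam * M).
rewrite -(ler_pM2l (expR_gt0 (- (lam * m)))) -expRD => /le_trans; apply.
suff -> : - (lam * m) + (m / M * (lam * M) + (lam * M) ^+ 2 / 8) = lam ^+ 2 * M ^+ 2 / 8.
  by [].
by field; exact: lt0r_neq0.
Qed.

Lemma ler_sum_subpred (R : numDomainType) (I : finType) (P Q : pred I)
    (F : I -> R) :
  (forall i, P i -> Q i) -> (forall i, 0 <= F i) ->
  \sum_(i | P i) F i <= \sum_(i | Q i) F i.
Proof.
move=> PQ F_ge0; rewrite [leRHS](bigID P) /=.
rewrite [in leRHS](eq_bigl P) ?lerDl ?sumr_ge0 // => i.
exact/andb_idl/PQ.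
Qed.

Lemma chernoff_sum (R : realType) (I : finType) (F S : I -> R) (lam eps : R) :
  0 <= lam -> (forall i, 0 <= F i) ->
  \sum_(i | eps < S i) F i <= \sum_i F i * expR (lam * (S i - eps)).
Proof.
move=> lam_ge0 F_ge0.
apply: le_trans (_ : \sum_(i | eps < S i) F i * expR (lam * (S i - eps)) <= _).
  apply: ler_sum => i eps_lt; rewrite -[leLHS]mulr1 ler_wpM2l // -expR0 ler_expR.
  by rewrite mulr_ge0 // subr_ge0 ltW.
by apply: ler_sum_subpred => // i; rewrite mulr_ge0 ?expR_ge0.
Qed.

Section ExponentialWeights.
Context {R : realType} {A : finType} {T : nat}.
Variables (c : 'I_T -> A -> R) (M eta : R).
Hypotheses (M_gt0 : 0 < M) (c_range : forall t a, 0 <= c t a <= M).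
Variable a0 : A.

(* With [c t a := Cost a (bs t)], [ewdist] and [ewprob] unfold to [Pdist] and [Prob]. *)
Definition cumcost (k : nat) (a : A) : R := \sum_(s < T | (s < k)%N) c s a.
Definition potential (k : nat) : R := \sum_a expR (- eta * cumcost k a).
Definition ewdist (t : 'I_T) (a : A) : R := expR (- eta * cumcost t a) / potential t.
Definition expected_cost (t : 'I_T) : R := \sum_a ewdist t a * c t a.
Definition ewprob (E : pred {ffun 'I_T -> A}) : R :=
  \sum_(x | E x) \prod_t ewdist t (x t).

Lemma cumcost0 a : cumcost 0 a = 0.
Proof. by rewrite /cumcost big_pred0. Qed.

Lemma cumcostT a : cumcost T a = \sum_t c t a.
Proof. by apply: eq_bigl => s; rewrite ltn_ord. Qed.

Lemma cumcostS (t : 'I_T) a : cumcost t.+1 a = cumcost t a + c t a.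
Proof.
rewrite /cumcost (bigD1 t) ?ltnSn //= addrC; congr (_ + _).
by apply: eq_bigl => s; rewrite ltnS andbC -ltn_neqAle.
Qed.

Lemma potential_gt0 k : 0 < potential k.
Proof.
by rewrite /potential (bigD1 a0) //= ltr_pwDl ?expR_gt0 ?sumr_ge0 // => a _; exact: expR_ge0.
Qed.

Lemma potential0 : potential 0 = #|A|%:R.
Proof.
by rewrite /potential (eq_bigr (fun=> 1)) ?sumr_const // => a _; rewrite cumcost0 mulr0 expR0.
Qed.

Lemma ewdist_ge0 t a : 0 <= ewdist t a.
Proof. by rewrite divr_ge0 ?expR_ge0 // ltW ?potential_gt0. Qed.

Lemma ewdist_sum1 t : \sum_a ewdist t a = 1.
Proof. by rewrite -mulr_suml divff // lt0r_neq0 ?potential_gt0. Qed.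

Lemma potentialS (t : 'I_T) : potential t.+1 = potential t * expR (- eta * expected_cost t)
  * \sum_a ewdist t a * expR (- eta * (c t a - expected_cost t)).
Proof.
rewrite mulr_sumr; apply: eq_bigr => a _.
have -> : - eta * cumcost t.+1 a = - eta * cumcost t a
    + (- eta * expected_cost t + - eta * (c t a - expected_cost t)).
  by rewrite cumcostS; ring.
by rewrite !expRD /ewdist; field; exact/lt0r_neq0/potential_gt0.
Qed.

Lemma potentialS_le (t : 'I_T) :
  potential t.+1 <= potential t * expR (- eta * expected_cost t + eta ^+ 2 * M ^+ 2 / 8).
Proof.
rewrite potentialS expRD mulrA ler_wpM2l ?mulr_ge0 ?expR_ge0 ?(ltW (potential_gt0 _)) //.
rewrite -sqrrN; exact: hoeffding_lemma M_gt0 (ewdist_ge0 t) (ewdist_sum1 t) (c_range t).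
Qed.

Lemma hedge_bound a :
  eta * (\sum_t expected_cost t - \sum_t c t a) <= ln #|A|%:R + T%:R * (eta ^+ 2 * M ^+ 2 / 8).
Proof.
have log_growth : ln (potential T) - ln (potential 0)
    <= \sum_(t < T) (- eta * expected_cost t + eta ^+ 2 * M ^+ 2 / 8).
  rewrite -(telescope_sumr (fun k => ln (potential k)) (leq0n T)) big_mkord.
  apply: ler_sum => t _; rewrite lerBlDl -[X in _ <= _ + X]expRK.
  rewrite -lnM ?posrE ?expR_gt0 ?potential_gt0 //.
  by rewrite ler_ln ?posrE ?mulr_gt0 ?expR_gt0 ?potential_gt0 ?potentialS_le.
have single : - eta * \sum_t c t a <= ln (potential T).
  rewrite -cumcostT -[leLHS]expRK ler_ln ?posrE ?expR_gt0 ?potential_gt0 //.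
  by rewrite /potential (bigD1 a) //= lerDl sumr_ge0 // => b _; exact: expR_ge0.
move: log_growth; rewrite potential0 big_split /= -mulr_sumr sumr_const card_ord -mulr_natl.
lra.
Qed.

Lemma expected_regret_le a : (0 < T)%N -> eta = Num.sqrt (ln #|A|%:R / T%:R) ->
  \sum_t expected_cost t - \sum_t c t a <= (M ^+ 2 / 8 + 1) * Num.sqrt (T%:R * ln #|A|%:R).
Proof.
move=> T_gt0 eta_def; set L := ln #|A|%:R.
have A_gt0 : (0 < #|A|)%N by apply/card_gt0P; exists a0.
have L_ge0 : 0 <= L by rewrite ln_ge0 // ler1n.
have T_gt0' : 0 < T%:R :> R by rewrite ltr0n.
have [L0|L_neq0] := eqVneq L 0.
  (* Then eta = 0 and the hedge bound is void, but there is only one action. *)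
  have /card_le1_eqP all_eq : (#|A| <= 1)%N.
    by move/eqP: L0; rewrite ln_eq0 ?ltr0n // pnatr_eq1 => /eqP ->.
  have -> : \sum_t expected_cost t = \sum_t c t a.
    apply: eq_bigr => t _; rewrite /expected_cost (eq_bigr (fun b => ewdist t b * c t a)).
      by rewrite -mulr_suml ewdist_sum1 mul1r.
    by move=> b _; rewrite (all_eq b a).
  by rewrite subrr L0 mulr0 sqrtr0 mulr0.
have L_gt0 : 0 < L by rewrite lt0r L_neq0.
have eta_gt0 : 0 < eta by rewrite eta_def sqrtr_gt0 divr_gt0.
have eta_sq : eta ^+ 2 = L / T%:R by rewrite eta_def sqr_sqrtr // divr_ge0 // ltW.
have eta_sqrt : eta * Num.sqrt (T%:R * L) = L.
  rewrite eta_def -sqrtrM ?divr_ge0 ?ltW //.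
  have -> : L / T%:R * (T%:R * L) = L ^+ 2 by field; exact: lt0r_neq0.
  by rewrite sqrtr_sqr ger0_norm.
rewrite -(ler_pM2l eta_gt0).
suff -> : eta * ((M ^+ 2 / 8 + 1) * Num.sqrt (T%:R * L)) = L + T%:R * (eta ^+ 2 * M ^+ 2 / 8).
  exact: hedge_bound.
by rewrite mulrCA eta_sqrt eta_sq; field; exact: lt0r_neq0.
Qed.

Lemma ewprobT : ewprob predT = 1.
Proof. by rewrite /ewprob -bigA_distr_bigA big1 // => t _; exact: ewdist_sum1. Qed.

Lemma ewprob_subset (E F : pred {ffun 'I_T -> A}) :
  (forall x, E x -> F x) -> ewprob E <= ewprob F.
Proof.
move=> EF; apply: ler_sum_subpred => // x.
by apply: prodr_ge0 => t _; exact: ewdist_ge0.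
Qed.

Lemma ewprob_predC (E : pred {ffun 'I_T -> A}) : ewprob (predC E) = 1 - ewprob E.
Proof. by rewrite -ewprobT /ewprob [in RHS](bigID E) /= addrAC subrr add0r. Qed.

Definition deviation (x : {ffun 'I_T -> A}) : R := \sum_t (c t (x t) - expected_cost t).

Lemma ewprob_deviation_gt (lam eps : R) : 0 <= lam ->
  ewprob (fun x => eps < deviation x) <= expR (- (lam * eps) + T%:R * (lam ^+ 2 * M ^+ 2 / 8)).
Proof.
move=> lam_ge0.
have prod_ge0 (x : {ffun 'I_T -> A}) : 0 <= \prod_t ewdist t (x t).
  by apply: prodr_ge0 => t _; exact: ewdist_ge0.
apply: le_trans (@chernoff_sum R _ _ deviation lam eps lam_ge0 prod_ge0) _.
have factor (x : {ffun 'I_T -> A}) :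
    \prod_t ewdist t (x t) * expR (lam * (deviation x - eps)) = expR (- (lam * eps))
    * \prod_t (ewdist t (x t) * expR (lam * (c t (x t) - expected_cost t))).
  rewrite [X in _ = _ * X]big_split /= -expR_sum /deviation mulrBr mulr_sumr expRD.
  by rewrite mulrA [RHS]mulrC.
rewrite (eq_bigr _ (fun x _ => factor x)) -mulr_sumr.
rewrite -(bigA_distr_bigA (fun t a => ewdist t a * expR (lam * (c t a - expected_cost t)))).
rewrite expRD ler_wpM2l ?expR_ge0 //.
have -> : T%:R * (lam ^+ 2 * M ^+ 2 / 8) = \sum_(t < T) (lam ^+ 2 * M ^+ 2 / 8).
  by rewrite sumr_const card_ord mulr_natl.
rewrite expR_sum.
apply: ler_prod => t _; rewrite sumr_ge0 => [|a _]; last by rewrite mulr_ge0 ?ewdist_ge0 ?expR_ge0.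
exact: hoeffding_lemma M_gt0 (ewdist_ge0 t) (ewdist_sum1 t) (c_range t).
Qed.

Lemma ewprob_deviation_le (dl : R) : (0 < T)%N -> 0 < dl < 1 ->
  ewprob (fun x => M * Num.sqrt (2^-1 * ln dl^-1 * T%:R) < deviation x) <= dl.
Proof.
move=> T_gt0 /andP[dl_gt0 dl_lt1].
set s := Num.sqrt _.
have T_gt0' : 0 < T%:R :> R by rewrite ltr0n.
have L_gt0 : 0 < ln dl^-1 by rewrite ln_gt0 // invf_gt1.
have s_sq : s ^+ 2 = 2^-1 * ln dl^-1 * T%:R by rewrite sqr_sqrtr // !mulr_ge0 // ltW.
(* The minimiser of the Chernoff exponent for eps = M s. *)
pose lam := 4 * s / (T%:R * M).
have lam_ge0 : 0 <= lam by rewrite divr_ge0 ?mulr_ge0 ?sqrtr_ge0 // ltW // mulr_gt0.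
apply: le_trans (ewprob_deviation_gt lam (M * s) lam_ge0) _.
have -> : - (lam * (M * s)) + T%:R * (lam ^+ 2 * M ^+ 2 / 8) = - (2 * s ^+ 2 / T%:R).
  by rewrite /lam; field; rewrite !lt0r_neq0.
rewrite s_sq lnV ?posrE //.
have -> : - (2 * (2^-1 * - ln dl * T%:R) / T%:R) = ln dl by field; exact: lt0r_neq0.
by rewrite lnK ?posrE.
Qed.

End ExponentialWeights.

Lemma le_finmin {R : realType} {I : finType} {F : I -> R} {m : R} (i0 : I) :
  (forall i, m <= F i) -> m <= finmin F.
Proof.
move=> m_le; rewrite /finmin; case: pickP => [i _|/(_ i0)//].
by apply: (big_ind (fun y => m <= y)) => // x y mx my; rewrite le_min mx my.
Qed.

Lemma Act_card_gt0 {R : realType} {N : nat} {Alev : 'I_N -> {fset R}} :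
  (forall n, Alev n != fset0) -> (0 < #|Act Alev|)%N.
Proof.
move=> Alev_neq0; apply/card_gt0P.
by exists [ffun n => FSetSub (xchooseP (elimT (fset0Pn _) (Alev_neq0 n)))].
Qed.

Lemma Cost_range {R : realType} {N : nat} {Alev : 'I_N -> {fset R}}
    {fR fV : 'I_N -> R -> R} {fT : 'I_N -> 'I_N -> R -> R}
    {delta : ('I_N -> R) -> ('I_N -> R) -> 'I_N -> 'I_N -> R}
    {Theta : R} {a : Act Alev} {b : 'I_N -> R} :
  (forall n x, 0 < fR n x) -> (forall n x, 0 < fV n x) -> (forall n m x, 0 < fT n m x) ->
  `|CR fR a| <= Theta -> `|CV fV delta a b| <= Theta -> `|CT fT delta a b| <= Theta ->
  0 <= Cost fR fV fT delta a b <= 3 * Theta.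
Proof.
move=> fR_gt0 fV_gt0 fT_gt0.
have CR_ge0 : 0 <= CR fR a by apply: sumr_ge0 => n _; exact: ltW.
have CV_ge0 : 0 <= CV fV delta a b by apply: sumr_ge0 => n _; exact: ltW.
have CT_ge0 : 0 <= CT fT delta a b.
  by apply: sumr_ge0 => n _; apply: sumr_ge0 => m _; exact: ltW.
rewrite /Cost !ger0_norm // => CR_le CV_le CT_le.
apply/andP; split; lra.
Qed.

Theorem theorem1 (R : realType) (N : nat) (hN : (0 < N)%N)
  (Alev : 'I_N -> {fset R}) (hA : forall n, Alev n != fset0)
  (fR fV : 'I_N -> R -> R) (fT : 'I_N -> 'I_N -> R -> R)
  (hfR : forall n x, 0 < fR n x) (hfV : forall n x, 0 < fV n x)
  (hfT : forall n m x, 0 < fT n m x)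
  (delta : ('I_N -> R) -> ('I_N -> R) -> 'I_N -> 'I_N -> R)
  (hdelta : forall (a : Act Alev) (b : 'I_N -> R),
      optimal_transfer fV fT (aval a) b (delta (aval a) b))
  (Theta : R) (hTheta : 0 < Theta)
  (hCR : forall a : Act Alev, `|CR fR a| <= Theta)
  (hCT : forall (a : Act Alev) b, `|CT fT delta a b| <= Theta)
  (hCV : forall (a : Act Alev) b, `|CV fV delta a b| <= Theta)
  (T : nat) (hT : (0 < T)%N) (bs : 'I_T -> ('I_N -> R))
  (dl : R) (hdl0 : 0 < dl) (hdl1 : dl < 1) :
  let eta := Num.sqrt (ln (#|Act Alev|%:R) / T%:R) in
  Prob fR fV fT delta bs eta
    (fun x : {ffun 'I_T -> Act Alev} => regret fR fV fT delta bs x <=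
        (9 * Theta ^+ 2 / 8 + 1) * Num.sqrt (T%:R * ln (#|Act Alev|%:R))
        + 3 * Theta * Num.sqrt (2^-1 * ln dl^-1 * T%:R))
  >= 1 - dl.
Proof.
cbv zeta; set eta := Num.sqrt (ln _ / _).
pose c t (a : Act Alev) := Cost fR fV fT delta a (bs t).
have M_gt0 : 0 < 3 * Theta by rewrite mulr_gt0.
have c_range t a : 0 <= c t a <= 3 * Theta := Cost_range hfR hfV hfT (hCR a) (hCV a _) (hCT a _).
have /card_gt0P[a0 _] := Act_card_gt0 hA.
set B := (9 * Theta ^+ 2 / 8 + 1) * _.
set eps := 3 * Theta * _.
have regret_le x : deviation c eta x <= eps -> regret fR fV fT delta bs x <= B + eps.
  move=> dev_le.
  have best : \sum_t expected_cost c eta t - B <= finmin (fun a => \sum_t c t a).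
    apply: (le_finmin a0) => a.
    have := expected_regret_le c _ eta M_gt0 c_range a0 a hT erefl.
    rewrite /B (_ : 9 * Theta ^+ 2 / 8 = (3 * Theta) ^+ 2 / 8); [lra | ring].
  change (\sum_t c t (x t) - finmin (fun a => \sum_t c t a) <= B + eps).
  move: dev_le; rewrite /deviation sumrB; lra.
apply: le_trans (_ : 1 - ewprob c eta (fun x => eps < deviation c eta x) <= _).
  by rewrite lerD2l lerN2 (ewprob_deviation_le _ _ _ M_gt0 c_range a0) // hdl0.
rewrite -(ewprob_predC c eta a0); apply: (ewprob_subset c eta a0) => x /=.
by rewrite -leNgt; exact: regret_le.
Qed.
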